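(* Let $0\le r\le\infty$, let $f:V\to W$ be a smooth map between finite-dimensional real inner product spaces with $|f|_{[r]}<\infty$, let $\omega\in\mathcal B_k^r(W)$ and $J\in\mathcal N_k^r(V)$. Then $$\int_Jf^*\omega=\int_{f_*J}\omega.$$
   Context: For a simple $k$-vector $\alpha=w_1\wedge\dots\wedge w_k$, $M(\alpha)=\sqrt{\det\langle w_i,w_j\rangle}$. A monopolar $k$-chain in $V$ is a finite formal sum $\sum_i(p_i;\alpha_i)$, $p_i\in V$, $\alpha_i\in\Lambda_k(V)$, linear in the second slot at each point. $T_u(p;\alpha)=(p+u;\alpha)$, $\Delta_u=T_u-\mathrm{id}$, $\Delta^j_U=\Delta_{u_1}\circ\dots\circ\Delta_{u_j}$, $\|\Delta^j_U(p;\alpha)\|_j=|u_1|\cdots|u_j|M(\alpha)$. A $k$-form is a linear functional $\omega$ on monopolar $k$-chains; $\|\omega\|_0=\sup\{|\omega(p;\alpha)|:\alpha$ simple, $M(\alpha)=1\}$, $\|\omega\|_j=\sup\{|\omega(\Delta^j_U(p;\alpha))|:\|\Delta^j_U(p;\alpha)\|_j=1\}$, $|\omega|^{\natural_r}=\max_{0\le j\le r}\|\omega\|_j$, $\mathcal B_k^r$ = forms with finite norm. For a chain $P$, $|P|^{\natural_r}=\sup_{0\ne\omega\in\mathcal B_k^r}\omega(P)/|\omega|^{\natural_r}$; $\mathcal N_k^r$ is the completion of monopolar $k$-chains in this norm. For $J\in\mathcal N_k^r$, $\omega\in\mathcal B_k^r$: $\int_J\omega=\lim_i\omega(P_i)$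 for monopolar $P_i\to J$. Pushforward on chains: $f_*(x;v_1\wedge\dots\wedge v_k)=(f(x);Df_xv_1\wedge\dots\wedge Df_xv_k)$; $\|f\|_{[j]}=\sup|f_*\Delta^j_U(x;\alpha)|^{\natural_j}/\|\Delta^j_U(x;\alpha)\|_j$, $|f|_{[r]}=\max_{j\le r}\|f\|_{[j]}$; when $|f|_{[r]}<\infty$, $f_*$ extends continuously to chainlets, $f_*J=\lim f_*P_i$. Pullback: $f^*\omega(x;\alpha)=\omega(f_*(x;\alpha))$. *)

From HB Require Import structures.
From mathcomp Require Import all_boot all_order all_algebra.
From mathcomp Require Import all_classical all_reals all_analysis.
Set Implicit Arguments. Unset Strict Implicit. Unset Printing Implicit Defensive.
Import Order.TTheory GRing.Theory Num.Theory.
Import numFieldNormedType.Exports.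
Local Open Scope classical_set_scope.
Local Open Scope ring_scope.

Section Chainlets.
Variable R : realType.

Notation pt n := 'rV[R]_n.

Definition dotp n (u v : pt n) : R := \sum_(i < n) u ord0 i * v ord0 i.
Definition eucl n (u : pt n) : R := Num.sqrt (dotp u u).

(* A simple k-vector w_1 /\ ... /\ w_k is represented by the tuple
   (w_i)_{i<k}; its mass M = sqrt (det <w_i,w_j>). *)
Definition kvec n k := 'I_k -> pt n.
Definition mass n k (w : kvec n k) : R :=
  Num.sqrt (\det (\matrix_(i < k, j < k) dotp (w i) (w j))).

(* A monopolar k-chain: finite formal sum  sum_i c_i (p_i ; w_i) *)
Definition mchain n k := seq (R * pt n * kvec n k).

Definition chain_opp n k (P : mchain n k) : mchain n k :=
  map (fun t => (- t.1.1, t.1.2, t.2)) P.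
Definition chain_sub n k (P Q : mchain n k) : mchain n k := P ++ chain_opp Q.

Definition transl n k (u : pt n) (P : mchain n k) : mchain n k :=
  map (fun t => (t.1.1, t.1.2 + u, t.2)) P.
Fixpoint delta n k (U : seq (pt n)) (P : mchain n k) : mchain n k :=
  match U with
  | [::] => P
  | u :: U' => chain_sub (transl u (delta U' P)) (delta U' P)
  end.
Definition cell n k (p : pt n) (w : kvec n k) : mchain n k := [:: (1, p, w)].

(* k-forms: linear functionals on monopolar k-chains, i.e. functions
   p |-> (a linear functional on Lambda_k), given as alternating
   k-linear maps on the simple k-vectors. *)
Definition kform n k := pt n -> kvec n k -> R.

Definition upd n k (w : kvec n k) (i : 'I_k) (x : pt n) : kvec n k :=
  fun j => if j == i then x else w j.

Definition is_form n k (om : kform n k) : Prop :=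
  (forall p w i (a : R) (x y : pt n),
      om p (upd w i (a *: x + y)) = a * om p (upd w i x) + om p (upd w i y)) /\
  (forall p w (i j : 'I_k), i != j -> w i = w j -> om p w = 0).

Definition feval n k (om : kform n k) (P : mchain n k) : R :=
  \sum_(t <- P) t.1.1 * om t.1.2 t.2.

Definition dnorm n k (U : seq (pt n)) (w : kvec n k) : R :=
  (\prod_(u <- U) eucl u) * mass w.

Definition form_normj n k (j : nat) (om : kform n k) : \bar R :=
  ereal_sup [set (`| feval om (delta x.1.2 (cell x.1.1 x.2)) |)%:E
            | x in [set x : pt n * seq (pt n) * kvec n k |
                    size x.1.2 = j /\ dnorm x.1.2 x.2 = 1]].

(* smoothness index 0 <= r <= oo : [Some r] is a finite r, [None] is oo *)
Definition le_r (j : nat) (r : option nat) : bool :=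
  if r is Some r' then (j <= r')%N else true.

Definition form_norm n k (r : option nat) (om : kform n k) : \bar R :=
  ereal_sup [set form_normj j om | j in [set j | le_r j r]].

Definition inB n k (r : option nat) (om : kform n k) : Prop :=
  is_form om /\ (form_norm r om < +oo)%E.

Definition form_nonzero n k (om : kform n k) : Prop :=
  exists p w, om p w != 0.

(* |P|^{natural r} = sup_{0 <> omega in B_k^r} omega(P)/|omega|^{natural r}
   (the sup of the empty family is taken to be 0) *)
Definition chain_norm n k (r : option nat) (P : mchain n k) : \bar R :=
  ereal_sup ([set 0%E] `|`
    [set (feval om P / fine (form_norm r om))%:E
    | om in [set om : kform n k | inB r om /\ form_nonzero om]]).

(* Cauchy sequences of monopolar chains: representatives of elements of
   the completion N_k^r *)
Definition chain_cauchy n k (r : option nat) (P : nat -> mchain n k) : Prop :=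
  forall e : R, 0 < e -> exists N, forall i j, (N <= i)%N -> (N <= j)%N ->
    (chain_norm r (chain_sub (P i) (P j)) < e%:E)%E.

(* two Cauchy sequences represent the same chainlet *)
Definition chain_equiv n k (r : option nat) (P Q : nat -> mchain n k) : Prop :=
  forall e : R, 0 < e -> exists N, forall i, (N <= i)%N ->
    (chain_norm r (chain_sub (P i) (Q i)) < e%:E)%E.

Definition chainlet_int n k (om : kform n k) (P : nat -> mchain n k) : R :=
  limn (fun i => feval om (P i)).

Fixpoint iterD n m (vs : seq (pt n)) (f : pt n -> pt m) : pt n -> pt m :=
  match vs with
  | [::] => f
  | v :: vs' => fun x => 'D_v (iterD vs' f) x
  end.
Definition smooth n m (f : pt n -> pt m) : Prop :=
  forall (vs : seq (pt n)) (x : pt n), differentiable (iterD vs f) x.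

Definition push n m k (f : pt n -> pt m) (P : mchain n k) : mchain m k :=
  map (fun t : R * pt n * kvec n k => (t.1.1, f t.1.2, fun i : 'I_k => ('d f (t.1.2) : pt n -> pt m) (t.2 i))) P.

Definition pull n m k (f : pt n -> pt m) (om : kform m k) : kform n k :=
  fun x w => om (f x) (fun i => ('d f x : pt n -> pt m) (w i)).

Definition map_normj n m k (j : nat) (f : pt n -> pt m) : \bar R :=
  ereal_sup [set (chain_norm (Some j) (push f (delta x.1.2 (cell x.1.1 x.2)))
                  * ((dnorm x.1.2 x.2)^-1)%:E)%E
            | x in [set x : pt n * seq (pt n) * kvec n k |
                    size x.1.2 = j /\ dnorm x.1.2 x.2 != 0]].
Definition map_norm n m k (r : option nat) (f : pt n -> pt m) : \bar R :=
  ereal_sup [set map_normj k j f | j in [set j | le_r j r]].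

End Chainlets.

From HB Require Import structures.
From mathcomp Require Import all_boot all_order all_algebra.
From mathcomp Require Import all_classical all_reals all_analysis.
Import Order.TTheory GRing.Theory Num.Theory.
Import numFieldNormedType.Exports.
Local Open Scope classical_set_scope.
Local Open Scope ring_scope.

(* The chainlet norm is dual to the form norm: |omega(P)| <= |omega| |P| for
   every monopolar chain P (a nonzero form has positive norm, since it is
   nonzero on some unit simple k-vector spanned by basis vectors).  Since
   f^* omega (P) = omega (f_* P) and ||f^* omega||_j <= ||f||_[j] |omega|,
   the pushforward is Lipschitz in the chainlet norm, so it maps Cauchy
   sequences to Cauchy sequences; integrals along Cauchy sequences converge
   and only depend on the chainlet they represent.  Both sides of the
   formula are thus limits of the same sequence omega (f_* P_i). *)

Set Implicit Arguments. Unset Strict Implicit.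

Section Chainlets.
Variable R : realType.
Implicit Types (n m k : nat) (r : option nat).

Lemma upd_id n k (w : kvec R n k) i : upd w i (w i) = w.
Proof. by apply: funext => j; rewrite /upd; case: eqP => // ->. Qed.

Lemma dotp_delta n (a b : 'I_n) :
  dotp (delta_mx 0 a : 'rV[R]_n) (delta_mx 0 b) = (a == b)%:R.
Proof.
rewrite /dotp (bigD1 a) //= big1 => [|j ja]; rewrite !mxE ?eqxx /=.
  by rewrite mul1r addr0 eq_sym.
by rewrite (negbTE ja) mul0r.
Qed.

Lemma mass_orthonormal n k (w : kvec R n k) :
  (forall i j, dotp (w i) (w j) = (i == j)%:R) -> mass w = 1.
Proof.
move=> ortho; rewrite /mass.
have -> : \matrix_(i < k, j < k) dotp (w i) (w j) = 1%:M.
  by apply/matrixP => i j; rewrite !mxE ortho.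
by rewrite det1 sqrtr1.
Qed.

Section Forms.
Variables (n k : nat) (om : kform R n k).
Hypothesis om_form : is_form om.

Lemma form_upd0 p w i : om p (upd w i 0) = 0.
Proof.
have := om_form.1 p w i 1 0 0; rewrite scale1r addr0 mul1r.
by rewrite -{1}[om p _]addr0 => /addrI /esym.
Qed.

Lemma form_upd_sum p w i (I : Type) (s : seq I) (c : I -> R) (x : I -> 'rV[R]_n) :
  om p (upd w i (\sum_(l <- s) c l *: x l)) =
  \sum_(l <- s) c l * om p (upd w i (x l)).
Proof.
elim: s => [|a s IH]; first by rewrite !big_nil form_upd0.
by rewrite !big_cons om_form.1 IH.
Qed.

Lemma form_upd_basis p w i :
  om p w != 0 -> exists l, om p (upd w i (delta_mx 0 l)) != 0.
Proof.
move=> om_w; apply/existsP; apply: contraNT om_w; rewrite negb_exists.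
move=> /forallP om_basis0.
rewrite -[w](upd_id w i) [w i]row_sum_delta form_upd_sum big1 // => l _.
by rewrite (eqP (negPn (om_basis0 l))) mulr0.
Qed.

Lemma form_basis_witness p w (s : seq 'I_k) : om p w != 0 ->
  exists w', om p w' != 0 /\ forall i, i \in s -> exists l, w' i = delta_mx 0 l.
Proof.
move=> om_w; elim: s => [|i s [w' [om_w' basis_w']]]; first by exists w.
have [l om_l] := form_upd_basis i om_w'.
exists (upd w' i (delta_mx 0 l)); split=> [//|j]; rewrite inE /upd.
by case: eqP => [_ _|_ /= /basis_w' //]; exists l.
Qed.

Lemma form_nonzero_unit_mass :
  form_nonzero om -> exists p w, mass w = 1 /\ om p w != 0.
Proof.
move=> [p [w om_w]].
have [w' [om_w' basis_w']] := form_basis_witness (enum 'I_k) om_w.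
exists p, w'; split=> //; apply: mass_orthonormal => i j.
have [li wi] := basis_w' i (mem_enum _ i).
have [<-|ij] := eqVneq i j; first by rewrite wi dotp_delta !eqxx.
have [lj wj] := basis_w' j (mem_enum _ j).
rewrite wi wj dotp_delta; have [eq_l|//] := eqVneq li lj.
by move: om_w'; rewrite (om_form.2 p w' i j ij) ?eqxx // wi wj eq_l.
Qed.

End Forms.

Section FormNorm.
Variables (n k : nat) (r : option nat).
Implicit Types (om : kform R n k) (P : mchain R n k).

Lemma fevalB om P Q : feval om (chain_sub P Q) = feval om P - feval om Q.
Proof.
rewrite /feval /chain_sub big_cat /= /chain_opp big_map -sumrN.
by congr (_ + _); apply: eq_bigr => t _; rewrite mulNr.
Qed.

Lemma kform_oppE om p w : (- om) p w = - om p w.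
Proof. by []. Qed.

Lemma fevalN om P : feval (- om) P = - feval om P.
Proof. by rewrite /feval -sumrN; apply: eq_bigr => t _; rewrite kform_oppE mulrN. Qed.

Lemma feval_eq0 om P : ~ form_nonzero om -> feval om P = 0.
Proof.
move=> om0; rewrite /feval big1 // => t _.
suff -> : om t.1.2 t.2 = 0 by rewrite mulr0.
by apply/eqP; apply: contraT => om_t; case: om0; exists t.1.2, t.2.
Qed.

Lemma form_normN om : form_norm r (- om) = form_norm r om.
Proof.
congr ereal_sup; apply: eq_imagel => j _.
by congr ereal_sup; apply: eq_imagel => x _; rewrite fevalN normrN.
Qed.

Lemma inBN om : inB r om -> inB r (- om).
Proof.
move=> [[om_lin om_alt] om_fin]; split; last by rewrite form_normN.
split=> [p w i a x y|p w i j ij w_ij]; rewrite !kform_oppE.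
  by rewrite om_lin opprD mulrN.
by rewrite (om_alt p w i j ij w_ij) oppr0.
Qed.

Lemma form_nonzeroN om : form_nonzero om -> form_nonzero (- om).
Proof. by move=> [p [w om_w]]; exists p, w; rewrite kform_oppE oppr_eq0. Qed.

Lemma form_normj_le j om : le_r j r -> (form_normj j om <= form_norm r om)%E.
Proof. by move=> jr; apply: ereal_sup_ubound; exists j. Qed.

Lemma form_norm_le j om : le_r j r -> (form_norm (Some j) om <= form_norm r om)%E.
Proof.
move=> jr; apply: ereal_sup_le => _ [i ij <-]; exists i => //.
by case: r jr => //= r' jr; apply: leq_trans ij jr.
Qed.

Lemma form_norm_le0 om : ~ form_nonzero om -> (form_norm r om <= 0)%E.
Proof.
move=> om0; apply: ge_ereal_sup => _ [j _ <-]; apply: ge_ereal_sup => _ [x _ <-].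
by rewrite feval_eq0 ?normr0.
Qed.

Lemma unit_mass_le_form_norm om p w :
  mass w = 1 -> ((`|om p w|)%:E <= form_norm r om)%E.
Proof.
move=> w1; apply: le_trans (form_normj_le om (_ : le_r 0 r)); last by case: r.
apply: ereal_sup_ubound; exists (p, [::], w).
  by split=> //; rewrite /dnorm big_nil mul1r.
by rewrite /feval /= big_cons big_nil mul1r addr0.
Qed.

Lemma form_norm_gt0 om : inB r om -> form_nonzero om -> 0 < fine (form_norm r om).
Proof.
move=> [om_form om_fin] /(form_nonzero_unit_mass om_form) [p [w [w1 om_w]]].
apply: fine_gt0; rewrite om_fin andbT.
by apply: lt_le_trans (unit_mass_le_form_norm om p w1); rewrite lte_fin normr_gt0.
Qed.

Lemma form_norm_fin_num om : inB r om -> form_nonzero om -> form_norm r om \is a fin_num.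
Proof.
by move=> omB /(form_norm_gt0 omB); case: (form_norm r om) => //=; rewrite ltxx.
Qed.

Lemma chain_norm_ge0 P : (0 <= chain_norm r P)%E.
Proof. by apply: ereal_sup_ubound; left. Qed.

(* the supremum defining |P| also contains -om, whence the absolute value *)
Lemma norm_feval_div_le om P : inB r om -> form_nonzero om ->
  ((`|feval om P| / fine (form_norm r om))%:E <= chain_norm r P)%E.
Proof.
move=> omB om_nz; have [feval_ge0|feval_lt0] := leP 0 (feval om P).
  by rewrite ger0_norm //; apply: ereal_sup_ubound; right; exists om.
rewrite ltr0_norm // -fevalN -(form_normN om).
by apply: ereal_sup_ubound; right; exists (- om) => //; split;
  [exact: inBN | exact: form_nonzeroN].
Qed.

Lemma norm_feval_le om P c : inB r om -> form_nonzero om ->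
  (chain_norm r P <= c%:E)%E -> `|feval om P| <= c * fine (form_norm r om).
Proof.
move=> omB om_nz Pc; rewrite -ler_pdivrMr ?form_norm_gt0 // -lee_fin.
exact: le_trans (norm_feval_div_le P omB om_nz) Pc.
Qed.

Lemma norm_feval_lt om P e : inB r om -> form_nonzero om ->
  (chain_norm r P < e%:E)%E -> `|feval om P| < e * fine (form_norm r om).
Proof.
move=> omB om_nz Pe; rewrite -ltr_pdivrMr ?form_norm_gt0 // -lte_fin.
exact: le_lt_trans (norm_feval_div_le P omB om_nz) Pe.
Qed.

End FormNorm.

Lemma cauchy_seq_cvgn (u : nat -> R) :
  (forall e, 0 < e -> exists N, forall i j, (N <= i)%N -> (N <= j)%N ->
     `|u i - u j| < e) ->
  cvgn u.
Proof.
move=> u_cauchy; apply/cauchy_cvgP/cauchy_ballP => e e0.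
have [N uN] := u_cauchy e e0; rewrite near_simpl.
exists ([set i | (N <= i)%N], [set i | (N <= i)%N]); first by split; exists N.
by move=> [i j] /= [Ni Nj]; rewrite -ball_normE /= uN.
Qed.

Section Integral.
Variables (n k : nat) (r : option nat) (om : kform R n k).
Hypothesis omB : inB r om.

Lemma feval_cvgn P : chain_cauchy r P -> cvgn (fun i => feval om (P i)).
Proof.
move=> P_cauchy; have [om_nz|om0] := pselect (form_nonzero om); last first.
  by under eq_fun do rewrite feval_eq0 //; exact: is_cvg_cst.
have om_gt0 := form_norm_gt0 omB om_nz.
apply: cauchy_seq_cvgn => e e0.
have [N PN] := P_cauchy (e / fine (form_norm r om)) (divr_gt0 e0 om_gt0).
exists N => i j Ni Nj; rewrite -fevalB.
by rewrite -[e](divfK (lt0r_neq0 om_gt0)) norm_feval_lt // PN.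
Qed.

Lemma chainlet_int_equiv P Q : chain_cauchy r P -> chain_cauchy r Q ->
  chain_equiv r P Q -> chainlet_int om P = chainlet_int om Q.
Proof.
move=> P_cauchy Q_cauchy PQ; rewrite /chainlet_int.
have [om_nz|om0] := pselect (form_nonzero om); last first.
  suff feval0 (S : nat -> mchain R n k) : (fun i => feval om (S i)) = fun=> 0.
    by rewrite !feval0.
  by apply: funext => i; rewrite feval_eq0.
have om_gt0 := form_norm_gt0 omB om_nz.
have diff0 :
    ((fun i => feval om (P i)) - (fun i => feval om (Q i))) @ \oo --> (0 : R).
  apply/cvgrPdist_lt => e e0.
  have [N PQN] := PQ (e / fine (form_norm r om)) (divr_gt0 e0 om_gt0).
  exists N => // i /= Ni; rewrite sub0r normrN !fctE -fevalB.
  by rewrite -[e](divfK (lt0r_neq0 om_gt0)) norm_feval_lt // PQN.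
apply/eqP; rewrite -subr_eq0; apply/eqP.
apply: (cvg_unique _ (cvgB (feval_cvgn P_cauchy) (feval_cvgn Q_cauchy)) diff0).
exact: norm_hausdorff.
Qed.

End Integral.

Section Pullback.
Variables (n m k : nat) (f : 'rV[R]_n -> 'rV[R]_m).
Implicit Types (om : kform R m k) (P : mchain R n k).

Lemma feval_pull om P : feval (pull f om) P = feval om (push f P).
Proof. by rewrite /feval /push big_map. Qed.

Lemma push_chain_sub P Q : push f (chain_sub P Q) = chain_sub (push f P) (push f Q).
Proof. by rewrite /push /chain_sub /chain_opp map_cat -!map_comp. Qed.

Lemma pull_form om : is_form om -> is_form (pull f om).
Proof.
move=> [om_lin om_alt]; split=> [p w i a x y|p w i j ij w_ij]; rewrite /pull.
  have upd_push v : (fun l => ('d f p : _ -> _) (upd w i v l)) =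
      upd (fun l => ('d f p : _ -> _) (w l)) i (('d f p : _ -> _) v).
    by apply: funext => l; rewrite /upd; case: eqP.
  by rewrite !upd_push linearP; exact: om_lin.
by apply: (om_alt _ _ i j ij); rewrite w_ij.
Qed.

Lemma pull_nonzero om : form_nonzero (pull f om) -> form_nonzero om.
Proof. by move=> [p [w om_w]]; exists (f p), (fun i => ('d f p : _ -> _) (w i)). Qed.

Variables (r : option nat) (L : R).
Hypotheses (L_ge0 : 0 <= L) (fL : (map_norm k r f <= L%:E)%E).

Lemma chain_norm_push_diff_le j p U (w : kvec R n k) :
  le_r j r -> size U = j -> dnorm U w = 1 ->
  (chain_norm (Some j) (push f (delta U (cell p w))) <= L%:E)%E.
Proof.
move=> jr Uj Uw; apply: le_trans fL; apply: le_trans (_ : map_normj k j f <= _)%E.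
  apply: ereal_sup_ubound; exists (p, U, w); first by rewrite /= Uw oner_neq0.
  by rewrite /= Uw invr1 mule1.
by apply: ereal_sup_ubound; exists j.
Qed.

Lemma pull_form_norm_le om : inB r om -> form_nonzero om ->
  (form_norm r (pull f om) <= (L * fine (form_norm r om))%:E)%E.
Proof.
move=> omB om_nz.
apply: ge_ereal_sup => _ [j jr <-]; apply: ge_ereal_sup => _ [[[p U] w] /= [Uj Uw] <-].
have omBj : inB (Some j) om.
  by split; [exact: omB.1 | exact: le_lt_trans (form_norm_le om jr) omB.2].
rewrite feval_pull lee_fin.
apply: le_trans (norm_feval_le omBj om_nz (chain_norm_push_diff_le p jr Uj Uw)) _.
apply: ler_wpM2l => //.
by apply: fine_le; rewrite ?form_norm_fin_num //; exact: form_norm_le.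
Qed.

Lemma pull_inB om : inB r om -> inB r (pull f om).
Proof.
move=> omB; split; first exact: pull_form omB.1.
have [pull_nz|pull0] := pselect (form_nonzero (pull f om)).
  exact: le_lt_trans (pull_form_norm_le omB (pull_nonzero pull_nz)) (ltry _).
exact: le_lt_trans (form_norm_le0 r pull0) (ltry _).
Qed.

Lemma chain_norm_push_le (D : mchain R n k) c : (chain_norm r D < c%:E)%E ->
  (chain_norm r (push f D) <= (L * c)%:E)%E.
Proof.
move=> Dc; have c_gt0 : 0 < c by rewrite -lte_fin (le_lt_trans (chain_norm_ge0 _ _) Dc).
apply: ge_ereal_sup => _ [->|[om [omB om_nz] <-]]; first by rewrite lee_fin mulr_ge0 // ltW.
rewrite lee_fin -feval_pull ler_pdivrMr ?form_norm_gt0 //.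
have [pull_nz|pull0] := pselect (form_nonzero (pull f om)); last first.
  by rewrite feval_eq0 // !mulr_ge0 // ?ltW ?form_norm_gt0.
have pull_le := pull_form_norm_le omB om_nz.
rewrite -(fineK (form_norm_fin_num (pull_inB omB) pull_nz)) lee_fin in pull_le.
apply: le_trans (ler_norm _) _.
apply: le_trans (ltW (norm_feval_lt (pull_inB omB) pull_nz Dc)) _.
by rewrite [L * c]mulrC -mulrA ler_pM2l.
Qed.

Lemma push_cauchy (P : nat -> mchain R n k) :
  chain_cauchy r P -> chain_cauchy r (fun i => push f (P i)).
Proof.
move=> P_cauchy e e0; have L1_gt0 : 0 < L + 1 by rewrite ltr_wpDl.
have [N PN] := P_cauchy (e / (L + 1)) (divr_gt0 e0 L1_gt0).
exists N => i j Ni Nj; rewrite -push_chain_sub.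
apply: le_lt_trans (chain_norm_push_le (PN i j Ni Nj)) _.
by rewrite lte_fin mulrA ltr_pdivrMr // mulrC ltr_pM2l // ltrDl.
Qed.

End Pullback.
End Chainlets.

Unset Implicit Arguments.

Theorem mainTheorem11 (R : realType) (n m k : nat) (r : option nat)
    (f : 'rV[R]_n -> 'rV[R]_m) (om : kform R m k)
    (P : nat -> mchain R n k) (Q : nat -> mchain R m k) :
  smooth f ->
  (map_norm k r f < +oo)%E ->
  inB r om ->
  chain_cauchy r P ->
  chain_cauchy r Q ->
  chain_equiv r Q (fun i => push f (P i)) ->
  [/\ inB r (pull f om),
      chain_cauchy r (fun i => push f (P i)),
      cvgn (fun i => feval (pull f om) (P i)),
      cvgn (fun i => feval om (Q i))
    & chainlet_int (pull f om) P = chainlet_int om Q].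
Proof.
move=> _ f_fin omB P_cauchy Q_cauchy QP.
pose L := `|fine (map_norm k r f)|.
have fL : (map_norm k r f <= L%:E)%E.
  rewrite /L; case: (map_norm k r f) f_fin => [x _|//|_].
  - by rewrite lee_fin ler_norm.
  - exact: leNye.
have L_ge0 : 0 <= L := normr_ge0 _.
have pull_omB := pull_inB L_ge0 fL omB.
have pushP_cauchy := push_cauchy L_ge0 fL P_cauchy.
have pull_cvg := feval_cvgn pull_omB P_cauchy.
have Q_cvg := feval_cvgn omB Q_cauchy.
split=> //.
rewrite (chainlet_int_equiv omB Q_cauchy pushP_cauchy QP) /chainlet_int.
by under eq_fun do rewrite feval_pull.
Qed.
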